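(* Let $(\mathcal{X},d)$ be a finite metric space $\mathcal{X}=\{x_0,x_1,\dots,x_n\}$ ($n\ge 1$, the $x_i$ pairwise distinct), and let $(\mathcal{Y},\|\cdot\|)$ be a non-trivial, strictly convex real Banach space. Then the set of extreme points of the convex set $\operatorname{Lip}^1_0\subset\mathcal{Y}^{n+1}$ is exactly $\mathcal{E}$, i.e. $\operatorname{ext}(\operatorname{Lip}^1_0)=\mathcal{E}$.
   Context: $\operatorname{Lip}^1_0$ denotes the set of all $y=(y_0,\dots,y_n)\in\mathcal{Y}^{n+1}$ with $y_0=0$ and $\|y_i-y_j\|\le d(x_i,x_j)$ for all $i,j\in\{0,1,\dots,n\}$. An extreme point of a convex set $C$ is a point $y\in C$ such that $y=\lambda y^1+(1-\lambda)y^2$ with $y^1,y^2\in C$, $\lambda\in(0,1)$ implies $y^1=y^2=y$; $\operatorname{ext}(C)$ is the set of extreme points. $\mathcal{E}$ is the set of all $y\in\operatorname{Lip}^1_0$ such that for every $i\in\{1,\dots,n\}$ there exist $k\ge1$ and indices $0=i_0,i_1,\dots,i_k=i$ in $\{0,\dots,n\}$ with $\|y_{i_{j+1}}-y_{i_j}\|=d(x_{i_j},x_{i_{j+1}})$ for every $j=0,\dots,k-1$. *)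

From mathcomp Require Import all_boot all_order all_algebra.
From mathcomp Require Import all_classical all_reals all_analysis.
Unset Printing Implicit Defensive.
Import Order.TTheory GRing.Theory Num.Theory.
Import numFieldNormedType.Exports.
Local Open Scope ring_scope.
Local Open Scope classical_set_scope.

Definition is_metric {R : realType} {X : Type} (d : X -> X -> R) : Prop :=
  [/\ forall a b, 0 <= d a b,
      forall a b, d a b = 0 <-> a = b,
      forall a b, d a b = d b a &
      forall a b c, d a c <= d a b + d b c].

Definition strictly_convex {R : realType} (Y : normedModType R) : Prop :=
  forall u v : Y, `|u| = 1 -> `|v| = 1 -> u <> v -> `|u + v| < 2.

Definition nontrivial {R : realType} (Y : normedModType R) : Prop :=
  exists y : Y, y <> 0.

Definition Lip10 {R : realType} {X : Type} (Y : normedModType R) (n : nat)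
  (d : X -> X -> R) (x : 'I_n.+1 -> X) : set ('I_n.+1 -> Y) :=
  [set y | y ord0 = 0 /\ forall i j, `|y i - y j| <= d (x i) (x j)].

Definition ext_pts {R : realType} (Y : normedModType R) (n : nat)
  (C : set ('I_n.+1 -> Y)) : set ('I_n.+1 -> Y) :=
  [set y | C y /\
    forall (y1 y2 : 'I_n.+1 -> Y) (l : R), C y1 -> C y2 -> 0 < l < 1 ->
      (forall i, y i = l *: y1 i + (1 - l) *: y2 i) -> y1 = y /\ y2 = y].

Definition Eset {R : realType} {X : Type} (Y : normedModType R) (n : nat)
  (d : X -> X -> R) (x : 'I_n.+1 -> X) : set ('I_n.+1 -> Y) :=
  [set y | Lip10 Y n d x y /\
    forall i : 'I_n.+1, (0 < i)%N ->
      exists (k : nat) (p : nat -> 'I_n.+1),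
        [/\ (1 <= k)%N, p 0%N = ord0, p k = i &
            forall j, (j < k)%N ->
              `|y (p j.+1) - y (p j)| = d (x (p j)) (x (p j.+1))]].

From mathcomp Require Import all_boot all_order all_algebra.
From mathcomp Require Import all_classical all_reals all_analysis.
From mathcomp Require Import lra.
Import Order.TTheory GRing.Theory Num.Theory.
Import numFieldNormedType.Exports.
Set Implicit Arguments.
Unset Strict Implicit.
Local Open Scope ring_scope.
Local Open Scope classical_set_scope.

(* Call the edge i -> j tight for y when ||y_j - y_i|| = d(x_i, x_j), and call
   i connected (to 0) when i = 0 or a path of tight edges leads from 0 to i;
   E is then Lip^1_0 restricted to tuples all of whose points are connected.

   - E is contained in ext: strict convexity of Y says that a point of norm D
     on an open segment between two points of norm <= D forces the segment to
     be degenerate.  Hence if y = l y1 + (1-l) y2 and y1, y2 agree with y at i,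
     they also agree with y at every j reached by a tight edge; by induction
     along tight paths y1 = y2 = y.
   - ext is contained in E: let S be the set of connected points of y.  Every
     edge between S and its complement has positive slack; moving all points
     outside S by a vector w shorter than the least positive slack stays in
     Lip^1_0, and y is the midpoint of the moves by w and -w.  Extremality
     forces w = 0 unless S is everything, and Y nontrivial provides w <> 0. *)

Section StrictConvexity.
Variables (R : realType) (Y : normedModType R).
Hypothesis sc : strictly_convex Y.

Lemma strictly_convex_sphere (a b : Y) (D : R) :
  `|a| = D -> `|b| = D -> 0 < D -> a <> b -> `|a + b| < 2 * D.
Proof.
move=> na nb D0 ab.
have normV (c : Y) : `|c| = D -> `|D^-1 *: c| = 1.
  by move=> nc; rewrite normrZ nc ger0_norm ?invr_ge0 ?ltW // mulVf ?gt_eqF.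
have uv : D^-1 *: a <> D^-1 *: b.
  by move=> /(congr1 (fun z => D *: z)); rewrite !scalerA mulfV ?gt_eqF // !scale1r.
have := sc (normV _ na) (normV _ nb) uv.
by rewrite -scalerDr normrZ ger0_norm ?invr_ge0 ?ltW // ltr_pdivrMl // mulrC.
Qed.

Lemma strictly_convex_segment (a b : Y) (D l : R) :
  `|a| <= D -> `|b| <= D -> `|l *: a + (1 - l) *: b| = D -> 0 < l < 1 -> a = b.
Proof.
wlog lh : a b l / l <= 2^-1 => [hwlog na nb e hl|na nb e /andP[l0 l1]].
  have [lh|lh] := leP l (2^-1); first exact: (hwlog a b l).
  have [l0 l1] := andP hl.
  apply/esym/(hwlog b a (1 - l)) => //; first lra.
    by rewrite opprB addrC addrCA subrr addr0.
  by apply/andP; split; lra.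
have tri : D <= l * `|a| + (1 - l) * `|b|.
  rewrite -e; apply: (le_trans (ler_normD _ _)).
  by rewrite !normrZ !ger0_norm //; lra.
have Da : `|a| = D by apply/eqP; rewrite eq_le na /=; nra.
have Db : `|b| = D by apply/eqP; rewrite eq_le nb /=; nra.
have [D0|D0] := eqVneq D 0.
  by move: Da Db; rewrite D0 => /normr0_eq0 -> /normr0_eq0 ->.
have Dp : 0 < D by rewrite lt_def D0 -Da normr_ge0.
apply/eqP/negPn/negP => /eqP ab.
have hab := strictly_convex_sphere Da Db Dp ab.
(* l a + (1-l) b = l (a + b) + (1 - 2l) b has norm < l (2D) + (1-2l) D = D *)
have split_ab : l *: a + (1 - l) *: b = l *: (a + b) + (1 - 2 * l) *: b.
  rewrite scalerDr -addrA; congr (_ + _); rewrite -scalerDl; congr (_ *: _); lra.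
suff : `|l *: a + (1 - l) *: b| < D by rewrite e ltxx.
rewrite split_ab; apply: (le_lt_trans (ler_normD _ _)).
by rewrite !normrZ !ger0_norm; [rewrite Db; nra|lra|lra].
Qed.

End StrictConvexity.

Lemma finite_positive_lbound (R : realType) (T : finType) (f : T -> R) :
  exists2 e, 0 < e & forall t, 0 < f t -> e <= f t.
Proof.
exists (\big[Num.min/1]_(t | 0 < f t) f t); first by apply/bigmin_gtP.
by move=> t; apply: bigmin_le_cond.
Qed.

Lemma small_nonzero_vector (R : realType) (Y : normedModType R) (e : R) :
  nontrivial Y -> 0 < e -> exists2 w : Y, w <> 0 & `|w| <= e.
Proof.
move=> [v v0] e0; have nv : 0 < `|v| by rewrite normr_gt0; apply/eqP.
exists ((e / `|v|) *: v).
  by move/eqP; rewrite scaler_eq0 mulf_eq0 invr_eq0 !gt_eqF //= => /eqP.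
by rewrite normrZ ger0_norm ?divfK ?gt_eqF // ltW // divr_gt0.
Qed.

Section TightGraph.
Variables (R : realType) (Y : normedModType R) (X : Type) (d : X -> X -> R).
Variables (n : nat) (x : 'I_n.+1 -> X).
Hypothesis dsym : forall a b, d a b = d b a.

Notation conf := ('I_n.+1 -> Y).
Notation Lip := (Lip10 Y n d x).

Definition tight (y : conf) (i j : 'I_n.+1) : Prop :=
  `|y j - y i| = d (x i) (x j).

Definition connected (y : conf) (i : 'I_n.+1) : Prop :=
  i = ord0 \/ exists (k : nat) (p : nat -> 'I_n.+1),
    [/\ (1 <= k)%N, p 0%N = ord0, p k = i &
        forall j, (j < k)%N -> tight y (p j) (p j.+1)].

Lemma EsetE (y : conf) : Eset Y n d x y <-> Lip y /\ forall i, connected y i.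
Proof.
split=> [[Ly paths]|[Ly conn]]; split=> // i.
  by have [i0|ipos] := posnP i; [left; apply/val_inj|right; apply: paths].
by case: (conn i) => [->|//]; rewrite ltnn.
Qed.

Lemma connected_step (y : conf) (i j : 'I_n.+1) :
  connected y i -> tight y i j -> connected y j.
Proof.
move=> [->|[k [p [k1 p0 pk hp]]]] hij; right.
  exists 1%N, (fun m => if m == 0%N then ord0 else j); split => //.
  by move=> m; rewrite ltnS leqn0 => /eqP ->.
exists k.+1, (fun m => if m == k.+1 then j else p m); split; rewrite ?eqxx //.
move=> m; rewrite ltnS leq_eqVlt => /orP[/eqP ->|mk].
  by rewrite eqxx eqn_leq ltnn andbF pk.
by rewrite (@ltn_eqF m.+1) // (@ltn_eqF m) ?ltnS ?(ltnW mk) //; apply: hp.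
Qed.

Section Rigidity.
Hypothesis sc : strictly_convex Y.
Variables (y y1 y2 : conf) (l : R).
Hypotheses (L1 : Lip y1) (L2 : Lip y2) (hl : 0 < l < 1).
Hypothesis hy : forall i, y i = l *: y1 i + (1 - l) *: y2 i.

(* A convex decomposition of y that is exact at i stays exact across a
   tight edge i -> j: both increments attain the bound d(x_i, x_j), so
   strict convexity makes them equal. *)
Lemma tight_rigid (i j : 'I_n.+1) :
  y1 i = y i -> y2 i = y i -> tight y i j -> y1 j = y j /\ y2 j = y j.
Proof.
move=> e1 e2 hij.
have bound (z : conf) : Lip z -> `|z j - z i| <= d (x i) (x j).
  by move=> Lz; rewrite dsym; apply: Lz.2.
have incr : y j - y i = l *: (y1 j - y1 i) + (1 - l) *: (y2 j - y2 i).
  by rewrite (hy j) (hy i) !scalerBr opprD addrACA.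
have same := strictly_convex_segment sc (bound _ L1) (bound _ L2)
  (etrans (congr1 _ (esym incr)) hij) hl.
have incr1 : y j - y i = y1 j - y1 i.
  by rewrite incr -same -scalerDl addrCA subrr addr0 scale1r.
have incr2 : y j - y i = y2 j - y2 i by rewrite incr1 same.
split; apply: (addIr (- y i)).
  by rewrite -{1}e1 -incr1.
by rewrite -{1}e2 -incr2.
Qed.

Lemma connected_rigid (i : 'I_n.+1) :
  Lip y -> connected y i -> y1 i = y i /\ y2 i = y i.
Proof.
move=> Ly [->|[k [p [_ p0 pk hp]]]]; first by rewrite L1.1 L2.1 Ly.1.
suff along m : (m <= k)%N -> y1 (p m) = y (p m) /\ y2 (p m) = y (p m).
  by rewrite -pk; apply: along.
elim: m => [|m IH] hm.
  by rewrite p0 L1.1 L2.1 Ly.1.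
by have [e1 e2] := IH (ltnW hm); apply: tight_rigid e1 e2 (hp m hm).
Qed.

End Rigidity.

Lemma Eset_sub_ext : strictly_convex Y -> Eset Y n d x `<=` ext_pts Y n Lip.
Proof.
move=> sc y /EsetE[Ly conn]; split => // y1 y2 l L1 L2 hl hy.
by split; apply/funext => i; have [] := connected_rigid sc L1 L2 hl hy Ly (conn i).
Qed.

Definition slack (y : conf) (i j : 'I_n.+1) : R := d (x i) (x j) - `|y i - y j|.

Lemma slackC (y : conf) (i j : 'I_n.+1) : slack y i j = slack y j i.
Proof. by rewrite /slack dsym distrC. Qed.

Definition shift (S : set 'I_n.+1) (y : conf) (w : Y) : conf :=
  fun i => y i + (if `[< S i >] then 0 else w).

Section Shift.
Variables (y : conf) (S : set 'I_n.+1) (del : R) (w : Y).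
Hypotheses (Ly : Lip y) (S0 : S ord0).
Hypothesis S_closed : forall i j, S i -> tight y i j -> S j.
Hypothesis del_slack : forall i j, 0 < slack y i j -> del <= slack y i j.
Hypothesis small_w : `|w| <= del.

Lemma slack_out (i j : 'I_n.+1) : S i -> ~ S j -> 0 < slack y i j.
Proof.
move=> Si Sj; rewrite subr_gt0 lt_neqAle Ly.2 andbT.
by apply/eqP => t; apply/Sj/(S_closed Si); rewrite /tight distrC t.
Qed.

Lemma shift_Lip : Lip (shift S y w).
Proof.
split; first by rewrite /shift asboolT // addr0 Ly.1.
move=> i j; rewrite /shift; case: (asboolP (S i)) => Si; case: (asboolP (S j)) => Sj.
- by rewrite !addr0; apply: Ly.2.
- have bound := del_slack (slack_out Si Sj).
  rewrite addr0 opprD addrA; apply: (le_trans (ler_normB _ _)).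
  by rewrite -lerBrDl; apply: le_trans small_w bound.
- have := del_slack (slack_out Sj Si); rewrite slackC => bound.
  rewrite addr0 addrAC; apply: (le_trans (ler_normD _ _)).
  by rewrite -lerBrDl; apply: le_trans small_w bound.
- by rewrite opprD addrACA subrr addr0; apply: Ly.2.
Qed.

End Shift.

Lemma shift_midpoint (S : set 'I_n.+1) (y : conf) (w : Y) (i : 'I_n.+1) :
  y i = 2^-1 *: shift S y w i + (1 - 2^-1) *: shift S y (- w) i.
Proof.
have half : (1 - 2^-1 : R) = 2^-1 by lra.
have halves : (2^-1 + 2^-1 : R) = 1 by lra.
rewrite half /shift -scalerDr; case: asboolP => _.
  by rewrite !addr0 scalerDr -scalerDl halves scale1r.
by rewrite addrACA subrr addr0 scalerDr -scalerDl halves scale1r.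
Qed.

Lemma ext_sub_Eset : nontrivial Y -> ext_pts Y n Lip `<=` Eset Y n d x.
Proof.
move=> ntY y [Ly extr]; apply/EsetE; split => // i.
have [del del0 del_slack] := finite_positive_lbound (fun ij => slack y ij.1 ij.2).
have {}del_slack u v : 0 < slack y u v -> del <= slack y u v.
  exact: (del_slack (u, v)).
have [w w0 small_w] := small_nonzero_vector ntY del0.
have S0 : connected y ord0 by left.
have Lp := shift_Lip Ly S0 (@connected_step y) del_slack small_w.
have small_mw : `|- w| <= del by rewrite normrN.
have Lm := shift_Lip Ly S0 (@connected_step y) del_slack small_mw.
have half : (0 : R) < (2^-1 : R) < 1 by apply/andP; split; lra.
have [/(congr1 (fun f => f i)) yi _] := extr _ _ _ Lp Lm half (shift_midpoint _ _ _).
move: yi; rewrite /shift; case: asboolP => // _ /eqP.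
by rewrite -subr_eq0 addrAC subrr add0r => /eqP/w0.
Qed.

End TightGraph.

Theorem theorem1 (R : realType) (Y : completeNormedModType R)
  (X : Type) (d : X -> X -> R) (n : nat) (x : 'I_n.+1 -> X) :
  is_metric d -> (1 <= n)%N -> injective x ->
  nontrivial Y -> strictly_convex Y ->
  ext_pts Y n (Lip10 Y n d x) = Eset Y n d x.
Proof.
move=> [_ _ dsym _] _ _ ntY sc; apply/seteqP; split.
  exact: (ext_sub_Eset dsym ntY).
exact: (Eset_sub_ext dsym sc).
Qed.
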